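(* Let $\alpha=(\alpha_1,\dots,\alpha_t)\in\mathcal{P}(n)$ with $\delta(\alpha)=\big(1,2,\dots,q-1,q,q^{(s_q)},(q-1)^{(s_{q-1})},\dots,1^{(s_1)}\big)$, where $q\ge1$ and $s_1,\dots,s_q\ge0$. Then \[\alpha_1\in A_1=\Big\{q,\ q+s_q,\ q+s_q+s_{q-1},\ \dots,\ q+\sum_{i=1}^q s_i\Big\}.\] Equivalently, $\alpha\in\mathcal{P}(n,k)^*$ for some $k\in A_1$.
   Context: A partition of a positive integer $n$ is a finite non-increasing sequence $\alpha=(\alpha_1,\dots,\alpha_t)$ of positive integers with sum $n$; $\mathcal{P}(n)$ is the set of partitions of $n$, and $\alpha_i=0$ for $i>t$. The diagonal sequence is $\delta(\alpha)=(d_k)_{k\ge1}$ with $d_k=|\{i:1\le i\le k,\ \alpha_i+i-1\ge k\}|$, trailing zeros omitted; $j^{(s)}$ denotes $s$ consecutive entries equal to $j$. $\mathcal{P}(n,k)^*$ denotes the set of partitions of $n$ whose largest part equals $k$. *)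

From mathcomp Require Import all_boot.
Set Implicit Arguments. Unset Strict Implicit. Unset Printing Implicit Defensive.

(* Parts are 1-indexed in the paper: alpha_i = nth 0 alpha (i-1),
   and alpha_i = 0 for i > size alpha (automatic with default 0). *)
Definition is_partition (n : nat) (alpha : seq nat) : bool :=
  [&& sorted geq alpha, all (fun a => 0 < a) alpha & sumn alpha == n].

Definition part (alpha : seq nat) (i : nat) : nat := nth 0 alpha i.-1.

Definition diag_entry (alpha : seq nat) (k : nat) : nat :=
  count (fun i => k <= part alpha i + i - 1) (iota 1 k).

Definition strip_trailing_zeros (s : seq nat) : seq nat :=
  let r := rev s in rev (drop (find (fun x => x != 0) r) r).

(* The diagonal sequence delta(alpha) = (d_k)_{k>=1}, trailing zeros omitted.
   d_k = 0 for k >= alpha_1 + size alpha, hence for k > sumn alpha + size alpha,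
   so listing k = 1 .. sumn alpha + size alpha loses nothing. *)
Definition delta (alpha : seq nat) : seq nat :=
  strip_trailing_zeros
    [seq diag_entry alpha k | k <- iota 1 (sumn alpha + size alpha)].

Definition delta_shape (q : nat) (s : nat -> nat) : seq nat :=
  iota 1 q ++ flatten [seq nseq (s j) j | j <- rev (iota 1 q)].

From mathcomp Require Import all_boot.
From mathcomp Require Import zify.

Set Implicit Arguments.
Unset Strict Implicit.
Unset Printing Implicit Defensive.

(* Write [g i = alpha_i + i - 1], so that [d_k] counts the [i <= k] with
   [k <= g i].  Since [d_q = q], every [i <= q] has [g i >= q]; in particular
   [alpha_1 = g 1 >= q].  Let [k = alpha_1 > q].  As [g (i+1) <= g i + 1] for
   a partition, shifting indices by one gives [d_(k+1) <= d_k].  The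
   inequality is strict: [d_(q+1) <= q] yields some [i <= q + 1 <= k] with
   [g i < k], while [g 1 = k], so [g] crosses below [k] inside [1..k].  Hence
   [delta] strictly drops right after position [k > q], and in the tail
   [q^(s_q), ..., 1^(s_1)] this only happens after position
   [q + s_q + ... + s_j] for some [j]. *)

Lemma count_lt_in (T : eqType) (a1 a2 : pred T) (s : seq T) :
  {in s, subpred a1 a2} -> has (predD a2 a1) s -> count a1 s < count a2 s.
Proof.
move=> sub12 /hasP[x xs /andP[nx1 x2]].
have -> : count a2 s = count a1 (filter a2 s) + count (predC a1) (filter a2 s).
  by rewrite count_predC size_filter.
have -> : count a1 (filter a2 s) = count a1 s.
  rewrite count_filter; apply: eq_in_count => y ys /=.
  by case: (boolP (a1 y)) => // /(sub12 y ys) ->.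
rewrite -[X in X < _]addn0 ltn_add2l count_filter -has_count.
by apply/hasP; exists x => //=; rewrite nx1 x2.
Qed.

Lemma exists_crossing (P : pred nat) (m n : nat) :
  m <= n -> P m -> ~~ P n -> exists2 i, m <= i < n & P i && ~~ P i.+1.
Proof.
elim: n => [|n IHn]; first by rewrite leqn0 => /eqP-> ->.
rewrite leq_eqVlt => /orP[/eqP-> -> //|]; rewrite ltnS => le_mn Pm nPn1.
case Pn: (P n); first by exists n; [rewrite le_mn ltnSn | rewrite Pn].
case: (IHn le_mn Pm (negbT Pn)) => i /andP[le_mi lt_in] crossing.
by exists i; rewrite // le_mi ltnS ltnW.
Qed.

Lemma nth_strip_trailing_zeros (s : seq nat) (i : nat) :
  nth 0 (strip_trailing_zeros s) i = nth 0 s i.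
Proof.
rewrite /strip_trailing_zeros; set r := rev s; set m := find _ r.
have -> : s = rev (drop m r) ++ rev (take m r) by rewrite -rev_cat cat_take_drop revK.
rewrite nth_cat; case: ltnP => // le_size_i; rewrite (nth_default _ le_size_i).
have /allP zero_take : all (pred1 0) (rev (take m r)).
  rewrite all_rev -(eq_all (a1 := predC (fun x : nat => x != 0))) => [|x /=].
    by rewrite all_predC has_take_leq ?find_size // ltnn.
  by rewrite negbK.
case: (ltnP (i - size (rev (drop m r))) (size (rev (take m r)))) => [lt_i|]; last first.
  by move=> ?; rewrite nth_default.
by apply/esym/eqP; apply: zero_take; apply: mem_nth.
Qed.

Lemma leq_nth_sumn (s : seq nat) (i : nat) : nth 0 s i <= sumn s.
Proof.
elim: s i => [|x s IHs] [|i] //=; first exact: leq_addr.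
exact: leq_trans (IHs i) (leq_addl _ _).
Qed.

Lemma diag_entry_eq0 (alpha : seq nat) (k : nat) :
  sumn alpha + size alpha < k -> diag_entry alpha k = 0.
Proof.
move=> lt_k; apply/eqP; rewrite -leqn0 leqNgt -has_count; apply/hasPn => i.
rewrite mem_iota -ltnNge /part => /andP[i_gt0 lt_ik].
case: (ltnP i.-1 (size alpha)) => [|le_size_i]; last by rewrite nth_default //; lia.
by have := leq_nth_sumn alpha i.-1; lia.
Qed.

Lemma nth_delta (alpha : seq nat) (k : nat) :
  nth 0 (delta alpha) k = diag_entry alpha k.+1.
Proof.
rewrite /delta nth_strip_trailing_zeros.
case: (ltnP k (sumn alpha + size alpha)) => [lt_k|le_k].
  by rewrite (nth_map 0) ?size_iota // nth_iota // add1n.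
by rewrite nth_default ?size_map ?size_iota // diag_entry_eq0.
Qed.

Definition shape_tail (q : nat) (s : nat -> nat) : seq nat :=
  flatten [seq nseq (s j) j | j <- rev (iota 1 q)].

Lemma shape_tailS (q : nat) (s : nat -> nat) :
  shape_tail q.+1 s = nseq (s q.+1) q.+1 ++ shape_tail q s.
Proof. by rewrite /shape_tail -(addn1 q) iotaD rev_cat add1n addn1. Qed.

Lemma nth_shape_tail_le (q : nat) (s : nat -> nat) (m : nat) :
  nth 0 (shape_tail q s) m <= q.
Proof.
elim: q m => [|q IHq] m; first by rewrite nth_nil.
rewrite shape_tailS nth_cat size_nseq nth_nseq; case: ifP => _; first by case: ifP.
exact: leq_trans (IHq _) (leqnSn q).
Qed.

Lemma nth_shape_tail_drop (q : nat) (s : nat -> nat) (m : nat) :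
  nth 0 (shape_tail q s) m.+1 < nth 0 (shape_tail q s) m ->
  exists2 j, 0 < j <= q & m.+1 = \sum_(j <= i < q.+1) s i.
Proof.
elim: q m => [|q IHq] m; first by rewrite !nth_nil.
rewrite shape_tailS !nth_cat !nth_nseq size_nseq.
case: (ltngtP m.+1 (s q.+1)) => [_|lt_sm|eq_sm].
- by rewrite ltnn.
- rewrite subSn // => /IHq[j /andP[j_gt0 le_jq] sum_j].
  exists j; first by rewrite j_gt0 ltnW.
  rewrite big_nat_recr /=; last exact: ltnW.
  by rewrite -sum_j addSn subnK.
- move=> _; exists q.+1; first by rewrite leqnn.
  by rewrite big_nat_recr //= big_geq.
Qed.

Lemma nth_delta_shape_head (q : nat) (s : nat -> nat) (k : nat) :
  k < q -> nth 0 (delta_shape q s) k = k.+1.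
Proof. by move=> lt_kq; rewrite nth_cat size_iota lt_kq nth_iota // add1n. Qed.

Lemma nth_delta_shape_tail (q : nat) (s : nat -> nat) (k : nat) :
  q <= k -> nth 0 (delta_shape q s) k = nth 0 (shape_tail q s) (k - q).
Proof. by move=> le_qk; rewrite nth_cat size_iota ltnNge le_qk. Qed.

Lemma nth_delta_shape_drop (q : nat) (s : nat -> nat) (m : nat) : q <= m ->
  nth 0 (delta_shape q s) m.+1 < nth 0 (delta_shape q s) m ->
  exists2 j, 0 < j <= q & m.+1 = q + \sum_(j <= i < q.+1) s i.
Proof.
move=> le_qm; rewrite !nth_delta_shape_tail ?(leqW le_qm) // subSn //.
by case/nth_shape_tail_drop => j j_range sum_j; exists j; rewrite // -sum_j addnS subnKC.
Qed.

Section DiagonalEntries.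

Variable alpha : seq nat.

Lemma diag_entry_full_le_part1 (k : nat) :
  diag_entry alpha k = k -> k <= part alpha 1.
Proof.
case: k => [|k] // full.
have /allP/(_ 1) : all (fun i => k.+1 <= part alpha i + i - 1) (iota 1 k.+1).
  by rewrite all_count size_iota; apply/eqP.
by rewrite mem_iota leqnn add1n addnK; apply.
Qed.

Lemma diag_entry_lt_witness (k : nat) :
  diag_entry alpha k < k -> exists2 i, 0 < i <= k & part alpha i + i - 1 < k.
Proof.
move=> lt_k; have : ~~ all (fun i => k <= part alpha i + i - 1) (iota 1 k).
  by rewrite all_count size_iota neq_ltn; apply/orP; left.
by rewrite -has_predC => /hasP[i]; rewrite mem_iota add1n ltnS /= -ltnNge; exists i.
Qed.

Lemma diag_entry_after_part1 (k : nat) : part alpha 1 <= k ->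
  diag_entry alpha k.+1 = count (fun i => k < part alpha i.+1 + i) (iota 1 k).
Proof.
move=> le_k; rewrite /diag_entry /= addnK ltnNge le_k add0n (iotaDl 1 1) count_map.
by apply: eq_count => i /=; rewrite add1n addnS subn1.
Qed.

Hypothesis alpha_noninc : sorted geq alpha.

Lemma part_succ_le (i : nat) : part alpha i.+1 <= part alpha i.
Proof.
case: i => [|i]; first exact: leqnn.
rewrite /part /=; case: (ltnP i.+1 (size alpha)) => [lt_i|le_i].
  by have /(sortedP 0) := alpha_noninc; apply.
by rewrite nth_default.
Qed.

Lemma diag_entry_drop_after_part1 (k : nat) :
  k <= part alpha 1 -> diag_entry alpha k < k ->
  diag_entry alpha (part alpha 1).+1 < diag_entry alpha (part alpha 1).
Proof.
move=> le_k /diag_entry_lt_witness[i0 /andP[i0_gt0 le_i0k] short_i0].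
set a := part alpha 1 in le_k *.
rewrite diag_entry_after_part1 //; apply: count_lt_in.
  by move=> i; rewrite mem_iota => /andP[i_gt0 _] /=; have := part_succ_le i; lia.
have long_1 : a <= part alpha 1 + 1 - 1 by rewrite addnK.
have short_i0' : ~~ (a <= part alpha i0 + i0 - 1) by rewrite -ltnNge; lia.
have [i /andP[i_gt0 lt_ii0] /andP[long_i short_i1]] :=
  @exists_crossing (fun i => a <= part alpha i + i - 1) 1 i0 i0_gt0 long_1 short_i0'.
apply/hasP; exists i; first by rewrite mem_iota; lia.
by rewrite /= long_i andbT; lia.
Qed.

End DiagonalEntries.

Theorem proposition2p8 (n : nat) (alpha : seq nat) (q : nat) (s : nat -> nat) :
  0 < n -> is_partition n alpha -> 1 <= q ->
  delta alpha = delta_shape q s ->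
  exists2 j : nat, 1 <= j <= q.+1 &
    part alpha 1 = q + \sum_(j <= i < q.+1) s i.
Proof.
move=> _ /and3P[alpha_noninc _ _] q_gt0 delta_eq.
have d_shape k : diag_entry alpha k.+1 = nth 0 (delta_shape q s) k.
  by rewrite -nth_delta delta_eq.
set k := part alpha 1.
have : q <= k.
  apply: diag_entry_full_le_part1.
  by rewrite -{1}(prednK q_gt0) d_shape nth_delta_shape_head ?prednK ?ltn_predL.
rewrite leq_eqVlt => /orP[/eqP <-|lt_qk].
  by exists q.+1; rewrite ?leqnn // big_geq // addn0.
have : diag_entry alpha k.+1 < diag_entry alpha k.
  apply: (diag_entry_drop_after_part1 alpha_noninc lt_qk).
  by rewrite d_shape nth_delta_shape_tail // subnn ltnS nth_shape_tail_le.
have k_gt0 : 0 < k := ltn_trans q_gt0 lt_qk.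
have le_q_predk : q <= k.-1 by rewrite -ltnS prednK.
rewrite -(prednK k_gt0) !d_shape.
case/(nth_delta_shape_drop le_q_predk) => j /andP[j_gt0 le_jq] ->.
by exists j; rewrite ?j_gt0 ?(leqW le_jq).
Qed.
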